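(* Fix $0<\delta<\tfrac12$ and $0<\lambda\le 1\le\Lambda$. Let $\Omega\subset\mathbb H^n$ be open, let $A\in M_n(\lambda,\Lambda,\Omega)$ be continuous at a point $z_0\in\Omega$, and assume the matrix $M:=A(z_0)$ is symplectic. Let $\alpha=\frac{Q-2}{4}+\delta$ and $g(\zeta)=-\frac1\alpha\phi_M(\zeta)^{-\alpha}$ for $\zeta\ne0$. Then there exists $\epsilon_0>0$, depending only on $\lambda,\Lambda,Q,\delta$ and the function $\epsilon\mapsto\omega_A(z_0;\epsilon)$, such that $$-\mathrm{tr}\big(A(z)\,(D^2_{\mathbb H}g)(\zeta)\big)\ge0\qquad\text{for all }z\in B_{\epsilon_0}(z_0)\cap\Omega\text{ and all }\zeta\neq0.$$ If in addition $A\in C(\Omega,\omega)$ for a function $\omega$ as below, then $\epsilon_0$ can be chosen depending only on $\lambda,\Lambda,Q,\delta,\omega$ (independent of $z_0$ and $A$).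
   Context: Points are $z=(x,t)$, $\zeta=(\xi,\tau)\in\mathbb R^{2n+1}$. $J=\begin{pmatrix}0&-\mathbb I_n\\ \mathbb I_n&0\end{pmatrix}$, $Q=2n+2$. The Heisenberg group $\mathbb H^n$ is $\mathbb R^{2n+1}$ with $(x,t)\circ(\xi,\tau)=(x+\xi,t+\tau+2\langle Jx,\xi\rangle)$; $\rho(x,t)=(|x|^4+t^2)^{1/4}$, $d(z,\zeta)=\rho(z^{-1}\circ\zeta)$ with $(x,t)^{-1}=(-x,-t)$, and $B_R(z)=\{\zeta:d(z,\zeta)<R\}$. $X_i=\partial_{x_i}+2(Jx)_i\partial_t$, $D^2_{\mathbb H}\psi=\big(\tfrac12(X_iX_j+X_jX_i)\psi\big)_{i,j=1}^{2n}$. $M_n(\lambda,\Lambda,\Omega)$ is the set of symmetric matrix-valued functions $A$ on $\Omega$ with $\det A(z)=1$ and $\lambda\mathbb I_{2n}\le A(z)\le\Lambda\mathbb I_{2n}$ for all $z\in\Omega$. A matrix $M$ is symplectic if $M^{-1}=J^tMJ$. For symmetric positive definite constant $M$, $\phi_M(x,t)=\langle M^{-1}x,x\rangle^2+t^2$. The modulus of continuity is $\omega_A(z_0;\epsilon)=\sup_{z\in B_\epsilon(z_0)\cap\Omega}\|A(z)-A(z_0)\|$ (operator norm). Given a nondecreasing $\omega:[0,1)\to[0,1)$ with $\omega(0)=\lim_{s\to0^+}\omega(s)=0$, $C(\Omega,\omega)$ is the set of continuous matrix functions $A$ on $\Omega$ with $\omega_A(z_0;\epsilon)\le\omega(\epsilon)$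 for all $z_0\in\Omega$, $0<\epsilon<1$. *)

From mathcomp Require Import ssreflect ssrbool ssrfun eqtype ssrnat seq choice fintype bigop.
From mathcomp Require Import fingroup perm.
From Stdlib Require Import Reals ClassicalEpsilon.
Set Implicit Arguments. Unset Strict Implicit.
Local Open Scope R_scope.

(* the least upper bound of E when it exists (junk 0 otherwise) *)
Definition Rsup (E : R -> Prop) : R :=
  epsilon (inhabits 0%R) (fun l => is_lub E l).

(* the (ordinary) derivative of phi at s when it exists (junk otherwise);
   unique by uniqueness of limits *)
Definition lim_deriv (phi : R -> R) (s : R) : R :=
  epsilon (inhabits 0%R) (fun l => derivable_pt_lim phi s l).

Definition vec (m : nat) := 'I_m -> R.
Definition mat (m : nat) := 'I_m -> 'I_m -> R.

Definition rsum (m : nat) (F : 'I_m -> R) : R := \big[Rplus/0%R]_(i < m) F i.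

Definition dotv (m : nat) (u v : vec m) : R := rsum (fun i => u i * v i).
Definition vnorm (m : nat) (v : vec m) : R := sqrt (dotv v v).
Definition matvec (m : nat) (B : mat m) (v : vec m) : vec m :=
  fun i => rsum (fun j => B i j * v j).
Definition matmul (m : nat) (B C : mat m) : mat m :=
  fun i j => rsum (fun k => B i k * C k j).
Definition matsub (m : nat) (B C : mat m) : mat m := fun i j => B i j - C i j.
Definition transp (m : nat) (B : mat m) : mat m := fun i j => B j i.
Definition idm (m : nat) : mat m := fun i j => if i == j then 1 else 0.
Definition trace (m : nat) (B : mat m) : R := rsum (fun i => B i i).

Definition det (m : nat) (B : mat m) : R :=
  \big[Rplus/0%R]_(s : {perm 'I_m})
     ((-1) ^ (odd_perm s) * \big[Rmult/1%R]_(i < m) B i (s i)).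

Definition opnorm (m : nat) (B : mat m) : R :=
  Rsup (fun r => exists v : vec m, vnorm v = 1 /\ r = vnorm (matvec B v)).

(* the inverse matrix when it exists (junk otherwise) *)
Definition invm (m : nat) (B : mat m) : mat m :=
  epsilon (inhabits (@idm m))
    (fun C => matmul B C = @idm m /\ matmul C B = @idm m).

(* J = [[0, -I_n], [I_n, 0]] of size 2n *)
Definition Jmat (n : nat) : mat (2 * n) :=
  fun i j =>
    if ((nat_of_ord i < n) && (nat_of_ord j == nat_of_ord i + n))%nat then -1
    else if ((n <= nat_of_ord i) && (nat_of_ord j + n == nat_of_ord i))%nat then 1
    else 0.

(* M symplectic : M^{-1} = J^t M J, i.e. J^t M J is a two-sided inverse of M *)
Definition symplectic (n : nat) (M : mat (2 * n)) : Prop :=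
  let N := matmul (transp (@Jmat n)) (matmul M (@Jmat n)) in
  matmul M N = @idm (2 * n) /\ matmul N M = @idm (2 * n).

Definition pt (n : nat) := (vec (2 * n) * R)%type.

Definition origin (n : nat) : pt n := (fun _ => 0, 0).

Definition Hmul (n : nat) (z w : pt n) : pt n :=
  (fun i => fst z i + fst w i,
   snd z + snd w + 2 * dotv (matvec (@Jmat n) (fst z)) (fst w)).

Definition Hinv (n : nat) (z : pt n) : pt n := (fun i => - fst z i, - snd z).

Definition rho (n : nat) (z : pt n) : R :=
  sqrt (sqrt ((dotv (fst z) (fst z)) ^ 2 + (snd z) ^ 2)).

Definition Hdist (n : nat) (z w : pt n) : R := rho (Hmul (Hinv z) w).

Definition H_open (n : nat) (Om : pt n -> Prop) : Prop :=
  forall z, Om z -> exists r, 0 < r /\ forall w, Hdist z w < r -> Om w.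

Definition shift_x (n : nat) (z : pt n) (i : 'I_(2 * n)) (s : R) : pt n :=
  (fun k => if k == i then fst z k + s else fst z k, snd z).
Definition shift_t (n : nat) (z : pt n) (s : R) : pt n := (fst z, snd z + s).

Definition Dx (n : nat) (i : 'I_(2 * n)) (psi : pt n -> R) (z : pt n) : R :=
  lim_deriv (fun s => psi (shift_x z i s)) 0.
Definition Dt (n : nat) (psi : pt n -> R) (z : pt n) : R :=
  lim_deriv (fun s => psi (shift_t z s)) 0.

Definition Xf (n : nat) (i : 'I_(2 * n)) (psi : pt n -> R) (z : pt n) : R :=
  Dx i psi z + 2 * matvec (@Jmat n) (fst z) i * Dt psi z.

Definition HessH (n : nat) (psi : pt n -> R) (z : pt n) : mat (2 * n) :=
  fun i j => (Xf i (Xf j psi) z + Xf j (Xf i psi) z) / 2.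

Definition Qdim (n : nat) : R := INR (2 * n + 2).

Definition phiM (n : nat) (M : mat (2 * n)) (z : pt n) : R :=
  (dotv (matvec (invm M) (fst z)) (fst z)) ^ 2 + (snd z) ^ 2.

Definition alpha (n : nat) (delta : R) : R := (Qdim n - 2) / 4 + delta.

(* g(zeta) = -(1/alpha) phi_M(zeta)^{-alpha}  (only used for zeta <> 0) *)
Definition gfun (n : nat) (delta : R) (M : mat (2 * n)) (z : pt n) : R :=
  - (1 / alpha n delta) * Rpower (phiM M z) (- alpha n delta).

Definition symm (m : nat) (B : mat m) : Prop := forall i j, B i j = B j i.

Definition in_Mn (n : nat) (lam Lam : R) (Om : pt n -> Prop)
    (A : pt n -> mat (2 * n)) : Prop :=
  forall z, Om z ->
    symm (A z) /\ det (A z) = 1 /\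
    (forall v : vec (2 * n),
       lam * dotv v v <= dotv (matvec (A z) v) v <= Lam * dotv v v).

Definition cont_at (n : nat) (Om : pt n -> Prop) (A : pt n -> mat (2 * n))
    (z0 : pt n) : Prop :=
  forall e, 0 < e -> exists r, 0 < r /\
    forall z, Om z -> Hdist z0 z < r -> opnorm (matsub (A z) (A z0)) < e.

Definition omegaA (n : nat) (Om : pt n -> Prop) (A : pt n -> mat (2 * n))
    (z0 : pt n) (eps : R) : R :=
  Rsup (fun r => exists z, Om z /\ Hdist z0 z < eps /\
                   r = opnorm (matsub (A z) (A z0))).

Definition modulus (om : R -> R) : Prop :=
  (forall s, 0 <= s < 1 -> 0 <= om s < 1) /\
  (forall s t, 0 <= s -> s <= t -> t < 1 -> om s <= om t) /\
  om 0 = 0 /\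
  (forall e, 0 < e -> exists r, 0 < r /\ forall s, 0 < s < r -> om s < e).

Definition in_C (n : nat) (Om : pt n -> Prop) (om : R -> R)
    (A : pt n -> mat (2 * n)) : Prop :=
  (forall z, Om z -> cont_at Om A z) /\
  (forall z0 eps, Om z0 -> 0 < eps < 1 -> omegaA Om A z0 eps <= om eps).

From Pilot Require Import Defs.
From HB Require Import structures.
From mathcomp Require Import ssreflect ssrbool ssrfun eqtype ssrnat seq choice fintype bigop.
From mathcomp Require Import fingroup perm zify.
From Stdlib Require Import Reals ClassicalEpsilon Lra Lia FunctionalExtensionality.
From Coquelicot Require Import Coquelicot.
Set Implicit Arguments. Unset Strict Implicit.
Local Open Scope R_scope.

(* Write B = M^-1, u = <Bx, x> and P = 4u Bx + 4t Jx, the horizontal gradient of phi_M.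
   Then D^2_H g = phi^(-a-1) (-(a+1)/phi P (x) P + 8 Bx (x) Bx + 4u B + 8 Jx (x) Jx).
   Since M is symplectic, B = J^t M J, so <M Bx, Bx> = <M Jx, Jx> = u, <M Bx, Jx> = 0 and
   tr (M B) = 2n, and the bracket paired with M equals 16 delta u.  Paired with A(z) it
   moves by at most |A(z) - M| C(n, delta, lambda) u, because |Bx|^2, |Jx|^2 <= u / lambda
   and |P|^2 <= 32 phi u / lambda; so it stays nonnegative when |A(z) - M| <= 16 delta / C,
   which holds on a ball whose radius is read off omega_A(z0; .) or omega. *)

HB.instance Definition _ := Monoid.isComLaw.Build R 0 Rplus
  (fun a b c => esym (Rplus_assoc a b c)) Rplus_comm Rplus_0_l.
HB.instance Definition _ := Monoid.isMulLaw.Build R 0 Rmult Rmult_0_l Rmult_0_r.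
HB.instance Definition _ :=
  Monoid.isAddLaw.Build R Rmult Rplus Rmult_plus_distr_r Rmult_plus_distr_l.

Section RealSums.
Variable m : nat.
Implicit Types f g : 'I_m -> R.

Lemma eq_rsum f g : (forall i, f i = g i) -> rsum f = rsum g.
Proof. by move=> fg; apply: eq_bigr => i _. Qed.

Lemma rsumD f g : rsum (fun i => f i + g i) = rsum f + rsum g.
Proof. exact: big_split. Qed.

Lemma rsumZ c f : rsum (fun i => c * f i) = c * rsum f.
Proof. by rewrite /rsum big_distrr. Qed.

Lemma rsumN f : rsum (fun i => - f i) = - rsum f.
Proof. by rewrite (@eq_rsum _ (fun i => (-1) * f i)) ?rsumZ => [|i]; ring. Qed.

Lemma rsumB f g : rsum (fun i => f i - g i) = rsum f - rsum g.
Proof. by rewrite /Rminus -rsumN -rsumD. Qed.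

Lemma rsum_const c : rsum (fun _ : 'I_m => c) = INR m * c.
Proof.
rewrite /rsum big_const_ord; elim: m => [|k IH]; first by rewrite /=; ring.
by rewrite S_INR /= IH; ring.
Qed.

Lemma rsum_delta_r (i : 'I_m) f : rsum (fun k => f k * (if k == i then 1 else 0)) = f i.
Proof.
transitivity (rsum (fun k => if k == i then f k else 0)).
  by apply: eq_rsum => k; case: (k == i); ring.
by rewrite /rsum -big_mkcond big_pred1_eq.
Qed.

Lemma rsum_delta_l (i : 'I_m) f : rsum (fun k => (if i == k then 1 else 0) * f k) = f i.
Proof.
by rewrite -(rsum_delta_r i f); apply: eq_rsum => k; rewrite eq_sym; ring.
Qed.

Lemma exchange_rsum (F : 'I_m -> 'I_m -> R) :
  rsum (fun i => rsum (fun j => F i j)) = rsum (fun j => rsum (fun i => F i j)).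
Proof. exact: exchange_big. Qed.

Lemma rsum_ge0 f : (forall i, 0 <= f i) -> 0 <= rsum f.
Proof. by move=> f_ge0; rewrite /rsum; elim/big_ind: _ => // [|x y]; lra. Qed.

Lemma ler_rsum f g : (forall i, f i <= g i) -> rsum f <= rsum g.
Proof.
move=> fg; have : 0 <= rsum (fun i => g i - f i) by apply: rsum_ge0 => i; have := fg i; lra.
rewrite rsumB; lra.
Qed.

Lemma rsum_abs_le f g : (forall i, Rabs (f i) <= g i) -> Rabs (rsum f) <= rsum g.
Proof.
move=> fg; have fg' i := proj1 (Rabs_le_between _ _) (fg i).
by apply: Rabs_le; split; rewrite -?rsumN; apply: ler_rsum => i; have := fg' i; lra.
Qed.

Lemma rsum_gt0 f : (forall i, 0 <= f i) -> (exists i, 0 < f i) -> 0 < rsum f.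
Proof.
move=> f_ge0 [i fi_gt0]; rewrite /rsum (bigD1 i) //=.
by apply: Rplus_lt_le_0_compat => //; elim/big_ind: _ => // [|x y]; lra.
Qed.
End RealSums.

Section LinearAlgebra.
Variable m : nat.
Implicit Types (a b c : R) (u v w : vec m) (C D E : mat m).

Definition sqnorm v : R := dotv v v.
Definition qform C v w : R := dotv (matvec C v) w.
Definition lincomb a v b w : vec m := fun k => a * v k + b * w k.
Definition uvec (i : 'I_m) : vec m := fun k => if k == i then 1 else 0.

Lemma dotvC v w : dotv v w = dotv w v.
Proof. by apply: eq_rsum => i; ring. Qed.

Lemma dotv_lincombl a b u v w :
  dotv (lincomb a u b v) w = a * dotv u w + b * dotv v w.
Proof. by rewrite /dotv -!rsumZ -rsumD; apply: eq_rsum => i; rewrite /lincomb; ring. Qed.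

Lemma dotv_lincombr a b u v w :
  dotv w (lincomb a u b v) = a * dotv w u + b * dotv w v.
Proof. by rewrite dotvC dotv_lincombl (dotvC u) (dotvC v). Qed.

Lemma matvec_lincomb C a b v w :
  matvec C (lincomb a v b w) = lincomb a (matvec C v) b (matvec C w).
Proof.
apply: functional_extensionality => i.
by rewrite /matvec /lincomb -!rsumZ -rsumD; apply: eq_rsum => k; ring.
Qed.

Lemma qform_lincomb C a v b w :
  qform C (lincomb a v b w) (lincomb a v b w) =
  a * (a * qform C v v + b * qform C v w) + b * (a * qform C w v + b * qform C w w).
Proof. by rewrite /qform matvec_lincomb dotv_lincombl !dotv_lincombr. Qed.

Lemma sqnorm_lincomb a v b w :
  sqnorm (lincomb a v b w) = a ^ 2 * sqnorm v + 2 * a * b * dotv v w + b ^ 2 * sqnorm w.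
Proof. by rewrite /sqnorm dotv_lincombl !dotv_lincombr (dotvC w v); ring. Qed.

Lemma sqnorm_ge0 v : 0 <= sqnorm v.
Proof. by apply: rsum_ge0 => i; nra. Qed.

Lemma sqnorm_lincomb_le a v b w :
  sqnorm (lincomb a v b w) <= 2 * (a ^ 2 * sqnorm v + b ^ 2 * sqnorm w).
Proof.
have := sqnorm_ge0 (lincomb a v (- b) w).
rewrite !sqnorm_lincomb; lra.
Qed.

Lemma matvec_matmul C D v : matvec (matmul C D) v = matvec C (matvec D v).
Proof.
apply: functional_extensionality => i; rewrite /matvec /matmul.
transitivity (rsum (fun j => rsum (fun k => C i k * D k j * v j))).
  by apply: eq_rsum => j; rewrite Rmult_comm -rsumZ; apply: eq_rsum => k; ring.
by rewrite exchange_rsum; apply: eq_rsum => k; rewrite -rsumZ; apply: eq_rsum => j; ring.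
Qed.

Lemma matmulA C D E : matmul C (matmul D E) = matmul (matmul C D) E.
Proof.
apply: functional_extensionality => i; apply: functional_extensionality => j.
rewrite /matmul; transitivity (rsum (fun k => rsum (fun l => C i l * D l k * E k j))).
  by rewrite exchange_rsum; apply: eq_rsum => l; rewrite -rsumZ; apply: eq_rsum => k; ring.
by apply: eq_rsum => k; rewrite Rmult_comm -rsumZ; apply: eq_rsum => l; ring.
Qed.

Lemma matmul1mx C : matmul (@idm m) C = C.
Proof. by do 2 apply: functional_extensionality => ?; exact: rsum_delta_l. Qed.

Lemma matmulmx1 C : matmul C (@idm m) = C.
Proof. by do 2 apply: functional_extensionality => ?; exact: rsum_delta_r. Qed.

Lemma matvec1 v : matvec (@idm m) v = v.
Proof. by apply: functional_extensionality => i; exact: rsum_delta_l. Qed.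

Lemma qform_transp C v w : qform C v w = dotv v (matvec (transp C) w).
Proof.
rewrite /qform /dotv /matvec /transp.
transitivity (rsum (fun i => rsum (fun k => C i k * v k * w i))).
  by apply: eq_rsum => i; rewrite Rmult_comm -rsumZ; apply: eq_rsum => k; ring.
by rewrite exchange_rsum; apply: eq_rsum => k; rewrite -rsumZ; apply: eq_rsum => j; ring.
Qed.

Lemma transp_symm C : symm C -> transp C = C.
Proof. by move=> sC; do 2 apply: functional_extensionality => ?; rewrite /transp sC. Qed.

Lemma qformC C v w : symm C -> qform C v w = qform C w v.
Proof. by move=> sC; rewrite qform_transp transp_symm // dotvC. Qed.

Lemma qform_antisym_eq0 C v : (forall i k, C i k = - C k i) -> qform C v v = 0.
Proof.
move=> aC; suff: qform C v v = - qform C v v by lra.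
rewrite {1}qform_transp /qform dotvC /dotv -rsumN; apply: eq_rsum => i.
rewrite /matvec /transp Ropp_mult_distr_l -rsumN; congr (_ * _).
by apply: eq_rsum => k; rewrite (aC k i); ring.
Qed.

Lemma qform_matsub C D v w : qform (matsub C D) v w = qform C v w - qform D v w.
Proof.
rewrite /qform /dotv -rsumB; apply: eq_rsum => k.
by rewrite /matvec /matsub -Rmult_minus_distr_r -rsumB; congr (_ * _); apply: eq_rsum => j; ring.
Qed.

Lemma Rabs_qform_le C v w c : symm C -> (forall z, 0 <= qform C z z) -> 0 < c ->
  Rabs (qform C v w) <= (c * qform C v v + qform C w w / c) / 2.
Proof.
move=> sC psdC c_gt0; have Cwv := qformC v w sC.
have := psdC (lincomb c v 1 w); have := psdC (lincomb c v (-1) w).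
rewrite !qform_lincomb Cwv => H1 H2.
apply: Rabs_le; split; apply: (Rmult_le_reg_l (2 * c)); try lra;
  by field_simplify; lra.
Qed.

Lemma Rabs_dotv_le v w c : 0 < c -> Rabs (dotv v w) <= (c * sqnorm v + sqnorm w / c) / 2.
Proof.
have symm1 : symm (@idm m) by move=> i j; rewrite /idm eq_sym.
have := @Rabs_qform_le (@idm m) v w c symm1.
by rewrite /qform !matvec1; apply => z; rewrite matvec1; exact: sqnorm_ge0.
Qed.

Lemma dotv_uvec v i : dotv v (uvec i) = v i.
Proof. exact: rsum_delta_r. Qed.

Lemma sqnorm_uvec i : sqnorm (uvec i) = 1.
Proof. by rewrite /sqnorm dotv_uvec /uvec eqxx. Qed.

Lemma matvec_uvec C i : matvec C (uvec i) = fun j => C j i.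
Proof. by apply: functional_extensionality => j; exact: rsum_delta_r. Qed.

Lemma qform_uvec C i k : qform C (uvec k) (uvec i) = C i k.
Proof. by rewrite /qform matvec_uvec dotv_uvec. Qed.

Lemma trace_idm : trace (@idm m) = INR m.
Proof.
rewrite /trace (@eq_rsum _ _ (fun _ => 1)) ?rsum_const; first ring.
by move=> i; rewrite /idm eqxx.
Qed.

Lemma trace_matmul_matsub C D E :
  trace (matmul (matsub C D) E) = trace (matmul C E) - trace (matmul D E).
Proof.
rewrite /trace /matmul -rsumB; apply: eq_rsum => i.
by rewrite -rsumB; apply: eq_rsum => k; rewrite /matsub; ring.
Qed.

Lemma trace_matmul_outer_comb C H D p q r a1 a2 a3 a4 :
  (forall k i, H k i = a1 * (p k * p i) + a2 * (q k * q i) + a3 * D k i + a4 * (r k * r i)) ->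
  trace (matmul C H) =
  a1 * qform C p p + a2 * qform C q q + a3 * trace (matmul C D) + a4 * qform C r r.
Proof.
move=> defH; rewrite /trace /matmul /qform /dotv /matvec -!rsumZ -!rsumD.
apply: eq_rsum => i; rewrite (@eq_rsum _ _ (fun k =>
  a1 * (C i k * p k * p i) + a2 * (C i k * q k * q i) + a3 * (C i k * D k i)
  + a4 * (C i k * r k * r i))); last by move=> k; rewrite defH; ring.
have outer f : rsum (fun k => C i k * f k * f i) = rsum (fun k => C i k * f k) * f i.
  by rewrite Rmult_comm -rsumZ; apply: eq_rsum => k; ring.
by rewrite !rsumD !rsumZ !outer; ring.
Qed.
End LinearAlgebra.

Lemma Rsup_is_lub (E : R -> Prop) b r :
  (forall x, E x -> x <= b) -> E r -> is_lub E (Rsup E).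
Proof.
move=> Eb Er; have [l El] : {l | is_lub E l} by apply: completeness; [exists b | exists r].
by apply: (epsilon_spec (inhabits 0) (fun l => is_lub E l)); exists l.
Qed.

Lemma Rsup_ge (E : R -> Prop) b r : (forall x, E x -> x <= b) -> E r -> r <= Rsup E.
Proof. by move=> Eb Er; apply: (proj1 (Rsup_is_lub Eb Er)). Qed.

Lemma Rsup_le (E : R -> Prop) b r : (forall x, E x -> x <= b) -> E r -> Rsup E <= b.
Proof. by move=> Eb Er; apply: (proj2 (Rsup_is_lub Eb Er)). Qed.

Section OperatorNorm.
Variable m : nat.
Implicit Types (v w : vec m) (C : mat m).

Lemma sqnorm_eq0_or_gt0 v : (forall k, v k = 0) \/ 0 < sqnorm v.
Proof.
case: (classic (exists k, v k <> 0)) => [[k vk]|v0]; [right | left].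
  by apply: rsum_gt0 => [i|]; [nra | exists k; nra].
by move=> k; apply: NNPP => vk; apply: v0; exists k.
Qed.

Lemma sqnorm_eq1 v : vnorm v = 1 -> sqnorm v = 1.
Proof.
move=> v1; change (sqrt (sqnorm v) = 1) in v1.
by rewrite -(sqrt_sqrt _ (sqnorm_ge0 v)) v1; ring.
Qed.

(* A crude bound, but enough to make the supremum defining [opnorm] finite. *)
Lemma vnorm_matvec_le_rows C v : vnorm v = 1 ->
  vnorm (matvec C v) <= sqrt (rsum (fun i => ((sqnorm (fun k => C i k) + 1) / 2) ^ 2)).
Proof.
move=> /sqnorm_eq1 v1; apply: sqrt_le_1_alt; apply: ler_rsum => i.
have := Rabs_dotv_le (fun k => C i k) v Rlt_0_1; rewrite v1 => Ci.
change (Rabs (matvec C v i) <= (1 * sqnorm (fun k => C i k) + 1 / 1) / 2) in Ci.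
have := Rsqr_abs (matvec C v i); have := Rabs_pos (matvec C v i).
have := sqnorm_ge0 (fun k => C i k); rewrite /Rsqr; nra.
Qed.

Lemma vnorm_matvec_le_opnorm C v : vnorm v = 1 -> vnorm (matvec C v) <= opnorm C.
Proof.
move=> v1; apply: (Rsup_ge _ (ex_intro _ v (conj v1 erefl))).
by move=> _ [w [w1 ->]]; exact: vnorm_matvec_le_rows.
Qed.

Lemma sqnorm_matvec_le C b v : opnorm C <= b -> sqnorm (matvec C v) <= b ^ 2 * sqnorm v.
Proof.
move=> Cb; case: (sqnorm_eq0_or_gt0 v) => [v0 | v_gt0].
  have Cv0 k : matvec C v k = 0.
    by rewrite /matvec (@eq_rsum _ _ (fun _ => 0)) ?rsum_const => [|j]; rewrite ?v0; ring.
  rewrite /sqnorm /dotv !(@eq_rsum _ _ (fun _ => 0)) ?rsum_const => [|k|k];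
    rewrite ?Cv0 ?v0; lra.
pose a := / sqrt (sqnorm v); pose w := lincomb a v 0 v.
have s_gt0 : 0 < sqrt (sqnorm v) by apply: sqrt_lt_R0.
have a2 : a ^ 2 * sqnorm v = 1.
  by rewrite /a -{2}(sqrt_sqrt (sqnorm v)); [field | ]; lra.
have w1 : vnorm w = 1.
  rewrite /vnorm -/(sqnorm w) -sqrt_1; congr sqrt.
  by rewrite sqnorm_lincomb -a2; ring.
have Cw : sqnorm (matvec C w) = a ^ 2 * sqnorm (matvec C v).
  by rewrite /w matvec_lincomb sqnorm_lincomb; ring.
have Cw_le : sqnorm (matvec C w) <= b ^ 2.
  have := vnorm_matvec_le_opnorm C w1; rewrite /vnorm -/(sqnorm _).
  have := sqrt_sqrt _ (sqnorm_ge0 (matvec C w)); have := sqrt_pos (sqnorm (matvec C w)).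
  nra.
rewrite -[sqnorm (matvec C v)]Rmult_1_l -a2; nra.
Qed.

Lemma Rabs_qform_le_opnorm C e v w : 0 < e -> opnorm C <= e ->
  Rabs (qform C v w) <= e * (sqnorm v + sqnorm w) / 2.
Proof.
move=> e_gt0 Ce; have := Rabs_dotv_le (matvec C v) w (Rinv_0_lt_compat _ e_gt0).
have := sqnorm_matvec_le v Ce; have := sqnorm_ge0 w.
rewrite /qform /Rdiv Rinv_inv => w_ge0 Cv.
have : / e * sqnorm (matvec C v) <= e * sqnorm v.
  by apply: (Rmult_le_reg_l e) => //; rewrite -Rmult_assoc Rinv_r; nra.
nra.
Qed.

Lemma opnorm_le_entries C c : (0 < m)%nat -> 0 <= c -> (forall i k, Rabs (C i k) <= c) ->
  opnorm C <= sqrt (INR m * ((INR m * c ^ 2 + 1) / 2) ^ 2).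
Proof.
move=> m_gt0 c_ge0 Cc; pose e0 := uvec (Ordinal m_gt0).
have e01 : vnorm e0 = 1 by rewrite /vnorm -/(sqnorm e0) sqnorm_uvec sqrt_1.
apply: (Rsup_le _ (ex_intro _ e0 (conj e01 erefl))) => _ [v [v1 ->]].
apply: (Rle_trans _ _ _ (vnorm_matvec_le_rows C v1)); apply: sqrt_le_1_alt.
rewrite -rsum_const; apply: ler_rsum => i.
have Ci : sqnorm (fun k => C i k) <= INR m * c ^ 2.
  rewrite -rsum_const; apply: ler_rsum => k; have := Cc i k.
  have := Rabs_pos (C i k); have := Rsqr_abs (C i k); rewrite /Rsqr; nra.
have := sqnorm_ge0 (fun k => C i k); nra.
Qed.
End OperatorNorm.

Lemma Jmat_antisym n (i k : 'I_(2 * n)) : Jmat i k = - Jmat k i.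
Proof.
have := ltn_ord i; have := ltn_ord k; rewrite /Jmat.
by case: (ltnP i n) => ?; case: (ltnP k n) => ? /=;
  case: eqP => ?; case: eqP => ? /=; try lra; lia.
Qed.

Lemma qform_Jmat n (v : vec (2 * n)) : qform (@Jmat n) v v = 0.
Proof. exact/qform_antisym_eq0/Jmat_antisym. Qed.

Lemma Hdist_refl n (z : pt n) : Hdist z z = 0.
Proof.
have Jx_opp : matvec (@Jmat n) (fun i => - z.1 i) = fun i => - matvec (@Jmat n) z.1 i.
  by apply: functional_extensionality => i; rewrite /matvec -rsumN; apply: eq_rsum => k; ring.
have t_eq0 : dotv (fun i => - matvec (@Jmat n) z.1 i) z.1 = 0.
  rewrite /dotv (@eq_rsum _ _ (fun i => - (matvec (@Jmat n) z.1 i * z.1 i))) => [|i]; last ring.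
  by rewrite rsumN -/(dotv _ _) -/(qform _ _ _) qform_Jmat; ring.
have x_eq0 : dotv (fun i => - z.1 i + z.1 i) (fun i => - z.1 i + z.1 i) = 0.
  by rewrite /dotv (@eq_rsum _ _ (fun _ => 0)) ?rsum_const => [|i]; ring.
rewrite /Hdist /rho /Hmul /Hinv /= Jx_opp t_eq0 x_eq0.
by rewrite (_ : _ + _ = 0) ?sqrt_0 ?sqrt_0 //; ring.
Qed.

Lemma lim_deriv_eq f x l : is_derive f x l -> lim_deriv f x = l.
Proof.
move=> /is_derive_Reals fl; rewrite /lim_deriv.
have : derivable_pt_lim f x (epsilon (inhabits 0) (fun l => derivable_pt_lim f x l)).
  by apply: (epsilon_spec (inhabits 0) (fun l => derivable_pt_lim f x l)); exists l.
by move/uniqueness_limite; apply.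
Qed.

Lemma lim_deriv_eq_near f h x l :
  locally x (fun s => h s = f s) -> is_derive h x l -> lim_deriv f x = l.
Proof. by move=> hf /(is_derive_ext_loc _ _ _ _ hf); exact: lim_deriv_eq. Qed.

Lemma locally_gt0 (p : R -> R) x : ex_derive p x -> 0 < p x -> locally x (fun s => 0 < p s).
Proof.
move=> /(@ex_derive_continuous R_AbsRing R_NormedModule) p_cont px_gt0.
apply: p_cont; exists (mkposreal _ px_gt0) => y /= /Rabs_lt_between' []; lra.
Qed.

Lemma is_derive_Rpower_mul (phi P : R -> R) phi' P' c :
  is_derive phi 0 phi' -> is_derive P 0 P' -> 0 < phi 0 ->
  is_derive (fun s => Rpower (phi s) c / phi s * P s) 0
    (Rpower (phi 0) c / phi 0 * ((c - 1) * phi' / phi 0 * P 0 + P')).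
Proof.
move=> dphi dP phi0_gt0; rewrite /Rpower.
have ex_phi : ex_derive phi 0 by exists phi'.
have ex_P : ex_derive P 0 by exists P'.
auto_derive; first by repeat split => //; lra.
by rewrite (is_derive_unique _ _ _ dphi) (is_derive_unique _ _ _ dP); field; lra.
Qed.

Lemma is_derive_scal_Rpower (phi : R -> R) phi' k c :
  is_derive phi 0 phi' -> 0 < phi 0 ->
  is_derive (fun s => k * Rpower (phi s) c) 0 (k * c * Rpower (phi 0) c * phi' / phi 0).
Proof.
move=> dphi phi0_gt0; rewrite /Rpower.
have ex_phi : ex_derive phi 0 by exists phi'.
auto_derive; first by repeat split => //; lra.
by rewrite (is_derive_unique _ _ _ dphi); field; lra.
Qed.

Definition xform n (B : mat (2 * n)) (z : pt n) : R := qform B z.1 z.1.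
Definition phiB n (B : mat (2 * n)) (z : pt n) : R := xform B z ^ 2 + z.2 ^ 2.
Definition hgrad_phiB n (B : mat (2 * n)) (z : pt n) : vec (2 * n) :=
  lincomb (4 * xform B z) (matvec B z.1) (4 * z.2) (matvec (@Jmat n) z.1).

Section HorizontalDerivatives.
Variables (n : nat) (B : mat (2 * n)).
Hypothesis symB : symm B.
Implicit Types (z : pt n) (i j : 'I_(2 * n)).

Lemma shift_x_fst z i s : (shift_x z i s).1 = lincomb 1 z.1 s (uvec i).
Proof.
by apply: functional_extensionality => k; rewrite /shift_x /lincomb /uvec /=; case: (k == i); ring.
Qed.

Lemma matvec_shift_x (C : mat (2 * n)) z i s j :
  matvec C (shift_x z i s).1 j = matvec C z.1 j + s * C j i.
Proof. by rewrite shift_x_fst matvec_lincomb matvec_uvec /lincomb Rmult_1_l. Qed.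

Lemma xform_shift_x z i s :
  xform B (shift_x z i s) = xform B z + 2 * s * matvec B z.1 i + s ^ 2 * B i i.
Proof.
rewrite /xform shift_x_fst qform_lincomb (qformC (uvec i) _ symB) qform_uvec.
by rewrite /qform dotv_uvec; ring.
Qed.

Lemma shift_x0 z i : shift_x z i 0 = z.
Proof.
case: z => x t; rewrite /shift_x /=; congr (_, _).
by apply: functional_extensionality => k; case: (k == i); ring.
Qed.

Lemma shift_t0 z : shift_t z 0 = z.
Proof. by case: z => x t; rewrite /shift_t /=; congr (_, _); ring. Qed.

Lemma is_derive_phiB_shift_x z i :
  is_derive (fun s => phiB B (shift_x z i s)) 0 (4 * xform B z * matvec B z.1 i).
Proof.
rewrite (_ : (fun s => _) = fun s =>
  (xform B z + 2 * s * matvec B z.1 i + s ^ 2 * B i i) ^ 2 + z.2 ^ 2).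
  by auto_derive => //; ring.
by apply: functional_extensionality => s; rewrite /phiB xform_shift_x.
Qed.

Lemma is_derive_phiB_shift_t z : is_derive (fun s => phiB B (shift_t z s)) 0 (2 * z.2).
Proof.
rewrite (_ : (fun s => _) = fun s => xform B z ^ 2 + (z.2 + s) ^ 2) //.
by auto_derive => //; ring.
Qed.

Lemma is_derive_hgrad_shift_x z i j :
  is_derive (fun s => hgrad_phiB B (shift_x z i s) j) 0
    (8 * matvec B z.1 i * matvec B z.1 j + 4 * xform B z * B j i + 4 * z.2 * Jmat j i).
Proof.
rewrite (_ : (fun s => _) = fun s =>
  4 * (xform B z + 2 * s * matvec B z.1 i + s ^ 2 * B i i) * (matvec B z.1 j + s * B j i)
  + 4 * z.2 * (matvec (@Jmat n) z.1 j + s * Jmat j i)).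
  by auto_derive => //; ring.
apply: functional_extensionality => s.
by rewrite /hgrad_phiB /lincomb xform_shift_x !matvec_shift_x.
Qed.

Lemma is_derive_hgrad_shift_t z j :
  is_derive (fun s => hgrad_phiB B (shift_t z s) j) 0 (4 * matvec (@Jmat n) z.1 j).
Proof.
rewrite (_ : (fun s => _) = fun s =>
  4 * xform B z * matvec B z.1 j + 4 * (z.2 + s) * matvec (@Jmat n) z.1 j) //.
by auto_derive => //; ring.
Qed.

Lemma near_phiB_shift_x_gt0 z i : 0 < phiB B z -> locally 0 (fun s => 0 < phiB B (shift_x z i s)).
Proof.
move=> phi_gt0; apply: locally_gt0; first by eexists; exact: is_derive_phiB_shift_x.
by rewrite shift_x0.
Qed.

Lemma near_phiB_shift_t_gt0 z : 0 < phiB B z -> locally 0 (fun s => 0 < phiB B (shift_t z s)).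
Proof.
move=> phi_gt0; apply: locally_gt0; first by eexists; exact: is_derive_phiB_shift_t.
by rewrite shift_t0.
Qed.
End HorizontalDerivatives.

Section HessianOfPower.
Variables (n : nat) (B : mat (2 * n)) (k c : R).
Hypothesis symB : symm B.
Hypothesis kc1 : k * c = 1.
Let g (w : pt n) : R := k * Rpower (phiB B w) c.
Implicit Types (z : pt n) (i j : 'I_(2 * n)).

Lemma Xf_power z j : 0 < phiB B z ->
  Xf j g z = Rpower (phiB B z) c / phiB B z * hgrad_phiB B z j.
Proof.
move=> phi_gt0; rewrite /Xf /Defs.Dx /Dt.
have := is_derive_scal_Rpower k c (is_derive_phiB_shift_x symB z j).
have := is_derive_scal_Rpower k c (is_derive_phiB_shift_t B z).
rewrite shift_x0 shift_t0 => /(_ phi_gt0)/lim_deriv_eq -> /(_ phi_gt0)/lim_deriv_eq ->.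
by rewrite kc1 /hgrad_phiB /lincomb; field; lra.
Qed.

Lemma Xf_Xf_power z i j : 0 < phiB B z ->
  Xf i (Xf j g) z = Rpower (phiB B z) c / phiB B z *
   ((c - 1) * hgrad_phiB B z i * hgrad_phiB B z j / phiB B z +
    (8 * matvec B z.1 i * matvec B z.1 j + 4 * xform B z * B j i + 4 * z.2 * Jmat j i
     + 8 * matvec (@Jmat n) z.1 i * matvec (@Jmat n) z.1 j)).
Proof.
move=> phi_gt0.
have Xg_x : lim_deriv (fun s => Xf j g (shift_x z i s)) 0 =
  Rpower (phiB B z) c / phiB B z * ((c - 1) * (4 * xform B z * matvec B z.1 i) / phiB B z
    * hgrad_phiB B z j
    + (8 * matvec B z.1 i * matvec B z.1 j + 4 * xform B z * B j i + 4 * z.2 * Jmat j i)).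
  apply: (lim_deriv_eq_near (h := fun s => Rpower (phiB B (shift_x z i s)) c
            / phiB B (shift_x z i s) * hgrad_phiB B (shift_x z i s) j)).
    by move: (near_phiB_shift_x_gt0 symB i phi_gt0); apply: filter_imp => s /(Xf_power j) ->.
  have := is_derive_Rpower_mul c (is_derive_phiB_shift_x symB z i)
            (is_derive_hgrad_shift_x symB z i j).
  by rewrite shift_x0; apply.
have Xg_t : lim_deriv (fun s => Xf j g (shift_t z s)) 0 =
  Rpower (phiB B z) c / phiB B z * ((c - 1) * (2 * z.2) / phiB B z * hgrad_phiB B z j
    + 4 * matvec (@Jmat n) z.1 j).
  apply: (lim_deriv_eq_near (h := fun s => Rpower (phiB B (shift_t z s)) c
            / phiB B (shift_t z s) * hgrad_phiB B (shift_t z s) j)).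
    by move: (near_phiB_shift_t_gt0 phi_gt0); apply: filter_imp => s /(Xf_power j) ->.
  have := is_derive_Rpower_mul c (is_derive_phiB_shift_t B z) (is_derive_hgrad_shift_t B z j).
  by rewrite shift_t0; apply.
rewrite {1}/Xf /Defs.Dx /Dt Xg_x Xg_t /hgrad_phiB /lincomb.
by field; lra.
Qed.

(* The terms [4 t J_ji] cancel in the symmetrization because [J] is antisymmetric. *)
Lemma HessH_power z i j : 0 < phiB B z ->
  HessH g z i j = Rpower (phiB B z) c / phiB B z *
   ((c - 1) * hgrad_phiB B z i * hgrad_phiB B z j / phiB B z +
    (8 * matvec B z.1 i * matvec B z.1 j + 4 * xform B z * B i j
     + 8 * matvec (@Jmat n) z.1 i * matvec (@Jmat n) z.1 j)).
Proof.
move=> phi_gt0; rewrite /HessH !Xf_Xf_power // (Jmat_antisym j i) (symB j i).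
by field; lra.
Qed.

Lemma trace_matmul_HessH_power C z : 0 < phiB B z ->
  trace (matmul C (HessH g z)) = Rpower (phiB B z) c / phiB B z *
   ((c - 1) / phiB B z * qform C (hgrad_phiB B z) (hgrad_phiB B z)
    + 8 * qform C (matvec B z.1) (matvec B z.1) + 4 * xform B z * trace (matmul C B)
    + 8 * qform C (matvec (@Jmat n) z.1) (matvec (@Jmat n) z.1)).
Proof.
move=> phi_gt0; set K := Rpower (phiB B z) c / phiB B z.
rewrite (@trace_matmul_outer_comb _ C _ B (hgrad_phiB B z) (matvec B z.1)
  (matvec (@Jmat n) z.1) (K * (c - 1) / phiB B z) (8 * K) (4 * xform B z * K) (8 * K)).
  by field; lra.
by move=> l i; rewrite HessH_power // -/K; field; lra.
Qed.
End HessianOfPower.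

Section EllipticInverse.
Variables (m : nat) (lam Lam : R) (M B : mat m).
Hypotheses (lam_gt0 : 0 < lam) (Lam_gt0 : 0 < Lam) (symM : symm M).
Hypothesis ellM : forall v : vec m,
  lam * dotv v v <= dotv (matvec M v) v <= Lam * dotv v v.
Hypothesis mulMB : matmul M B = @idm m.
Implicit Types v : vec m.

Lemma qform_elliptic_ge0 v : 0 <= qform M v v.
Proof. by have := ellM v; have := sqnorm_ge0 v; rewrite /qform /sqnorm; nra. Qed.

Lemma matvec_mul_inv v : matvec M (matvec B v) = v.
Proof. by rewrite -matvec_matmul mulMB matvec1. Qed.

Lemma qform_matvec_inv v : qform M (matvec B v) (matvec B v) = qform B v v.
Proof. by rewrite /qform matvec_mul_inv dotvC. Qed.

Lemma lam_sqnorm_matvec_inv_le v : lam * sqnorm (matvec B v) <= qform B v v.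
Proof. by rewrite -qform_matvec_inv; exact: (proj1 (ellM _)). Qed.

Lemma sqnorm_matvec_inv_le v : lam ^ 2 * sqnorm (matvec B v) <= sqnorm v.
Proof.
have := Rabs_dotv_le (matvec B v) v lam_gt0; have := lam_sqnorm_matvec_inv_le v.
have := sqnorm_ge0 v; have := Rle_abs (dotv (matvec B v) v).
have : sqnorm v / lam * lam = sqnorm v by field; lra.
rewrite /qform; nra.
Qed.

Lemma sqnorm_le_qform_inv v : sqnorm v <= Lam * qform B v v.
Proof.
have := Rabs_qform_le (matvec B v) v symM qform_elliptic_ge0 Lam_gt0.
rewrite qform_matvec_inv {1}/qform matvec_mul_inv -/(sqnorm v) => H.
have := Rle_abs (sqnorm v); have := ellM v; rewrite -/(qform M v v) -/(sqnorm v) => -[_ MvLam] ?.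
have : qform M v v / Lam <= sqnorm v.
  by apply: (Rmult_le_reg_l Lam) => //; field_simplify; lra.
lra.
Qed.

Lemma Rabs_trace_matmul_inv_le E e : 0 < e -> opnorm E <= e ->
  Rabs (trace (matmul E B)) <= e * INR m * (1 / lam ^ 2 + 1) / 2.
Proof.
move=> e_gt0 Ee.
have -> : trace (matmul E B) = rsum (fun i => qform E (matvec B (uvec i)) (uvec i)).
  by apply: eq_rsum => i; rewrite /qform matvec_uvec dotv_uvec.
apply: (Rle_trans _ (rsum (fun _ : 'I_m => e * (1 / lam ^ 2 + 1) / 2))); last first.
  by right; rewrite rsum_const; field; lra.
apply: rsum_abs_le => i; apply: (Rle_trans _ _ _ (Rabs_qform_le_opnorm _ _ e_gt0 Ee)).
have := sqnorm_matvec_inv_le (uvec i); rewrite sqnorm_uvec => Bi.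
have : sqnorm (matvec B (uvec i)) <= 1 / lam ^ 2.
  by apply: (Rmult_le_reg_l (lam ^ 2)); [nra | field_simplify; lra].
have := sqnorm_ge0 (matvec B (uvec i)); nra.
Qed.
End EllipticInverse.

Section Symplectic.
Variables (n : nat) (M : mat (2 * n)).
Hypotheses (symM : symm M) (spM : symplectic M).

Lemma invm_symplectic : invm M = matmul (transp (@Jmat n)) (matmul M (@Jmat n)).
Proof.
have [MN NM] := spM.
have [MB BM] : matmul M (invm M) = @idm _ /\ matmul (invm M) M = @idm _.
  apply: (epsilon_spec (inhabits (@idm (2 * n)))
    (fun C => matmul M C = @idm _ /\ matmul C M = @idm _)).
  by exists (matmul (transp (@Jmat n)) (matmul M (@Jmat n))).
by rewrite -[LHS]matmulmx1 -MN matmulA BM matmul1mx.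
Qed.

Lemma matmul_invm : matmul M (invm M) = @idm (2 * n).
Proof. by rewrite invm_symplectic; case: spM. Qed.

Lemma symm_invm : symm (invm M).
Proof.
move=> i j; rewrite invm_symplectic /matmul /transp.
transitivity (rsum (fun k => rsum (fun l => Jmat k i * M k l * Jmat l j))).
  by apply: eq_rsum => k; rewrite -rsumZ; apply: eq_rsum => l; ring.
rewrite exchange_rsum; apply: eq_rsum => l; rewrite -rsumZ.
by apply: eq_rsum => k; rewrite (symM k l); ring.
Qed.

Lemma qform_Jmat_symplectic x :
  qform M (matvec (@Jmat n) x) (matvec (@Jmat n) x) = qform (invm M) x x.
Proof.
rewrite invm_symplectic /qform !matvec_matmul [RHS]dotvC -qform_transp.
by rewrite /qform dotvC.
Qed.

Lemma qform_invm_Jmat x : qform M (matvec (invm M) x) (matvec (@Jmat n) x) = 0.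
Proof. by rewrite /qform -matvec_matmul matmul_invm matvec1 dotvC; exact: qform_Jmat. Qed.

Lemma trace_matmul_invm : trace (matmul M (invm M)) = INR (2 * n).
Proof. by rewrite matmul_invm trace_idm. Qed.
End Symplectic.

(* The bracket of [- tr (C D^2_H g)] for [g = -(1/a) phi_B^(-a)], up to the positive factor
   [phi_B^(-a-1)]. *)
Definition hess_trace_form n (B C : mat (2 * n)) (a : R) (z : pt n) : R :=
  (a + 1) / phiB B z * qform C (hgrad_phiB B z) (hgrad_phiB B z)
  - 8 * qform C (matvec B z.1) (matvec B z.1) - 4 * xform B z * trace (matmul C B)
  - 8 * qform C (matvec (@Jmat n) z.1) (matvec (@Jmat n) z.1).

Lemma neg_trace_HessH_gfun n delta (M C : mat (2 * n)) (z : pt n) :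
  symm (invm M) -> 0 < alpha n delta -> 0 < phiB (invm M) z ->
  - trace (matmul C (HessH (gfun delta M) z)) =
  Rpower (phiB (invm M) z) (- alpha n delta) / phiB (invm M) z *
  hess_trace_form (invm M) C (alpha n delta) z.
Proof.
move=> symB a_gt0 phi_gt0.
have kc1 : - (1 / alpha n delta) * - alpha n delta = 1 by field; lra.
by rewrite (trace_matmul_HessH_power symB kc1) // /hess_trace_form; field; lra.
Qed.

Lemma hess_trace_form_matsub n (B C D : mat (2 * n)) a z :
  hess_trace_form B (matsub C D) a z = hess_trace_form B C a z - hess_trace_form B D a z.
Proof. by rewrite /hess_trace_form !qform_matsub trace_matmul_matsub; ring. Qed.

Definition hess_const n delta lam : R :=
  32 * (alpha n delta + 1) / lam + 16 / lam + 4 * INR n * (1 / lam ^ 2 + 1).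

Definition eps_threshold n delta lam : R := 16 * delta / hess_const n delta lam.

Lemma alphaE n delta : alpha n delta = INR n / 2 + delta.
Proof. by rewrite /alpha /Qdim plus_INR mult_INR /=; field. Qed.

Lemma alpha_gt0 n delta : 0 < delta -> 0 < alpha n delta.
Proof. by rewrite alphaE; have := pos_INR n; lra. Qed.

Lemma hess_const_gt0 n delta lam : 0 < delta -> 0 < lam -> 0 < hess_const n delta lam.
Proof.
move=> delta_gt0 lam_gt0; have := alpha_gt0 n delta_gt0; have := pos_INR n.
have : 0 < 1 / lam by apply: Rdiv_lt_0_compat; lra.
have : 0 < 1 / lam ^ 2 by apply: Rdiv_lt_0_compat; nra.
by rewrite /hess_const /Rdiv; nra.
Qed.

Lemma eps_threshold_gt0 n delta lam : 0 < delta -> 0 < lam -> 0 < eps_threshold n delta lam.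
Proof.
by move=> delta_gt0 lam_gt0; apply: Rdiv_lt_0_compat; [lra | exact: hess_const_gt0].
Qed.

Section KeyEstimate.
Variables (n : nat) (delta lam Lam : R) (M : mat (2 * n)).
Hypotheses (delta_gt0 : 0 < delta) (lam_gt0 : 0 < lam) (Lam_gt0 : 0 < Lam).
Hypotheses (symM : symm M) (spM : symplectic M).
Hypothesis ellM : forall v : vec (2 * n),
  lam * dotv v v <= dotv (matvec M v) v <= Lam * dotv v v.
Local Notation B := (invm M).
Let mulMB : matmul M B = @idm _ := matmul_invm spM.
Implicit Type z : pt n.

Lemma lam_sqnorm_invm_le_xform z : lam * sqnorm (matvec B z.1) <= xform B z.
Proof. exact: (lam_sqnorm_matvec_inv_le ellM mulMB). Qed.

Lemma lam_sqnorm_Jmat_le_xform z : lam * sqnorm (matvec (@Jmat n) z.1) <= xform B z.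
Proof. by rewrite /xform -qform_Jmat_symplectic //; exact: (proj1 (ellM _)). Qed.

Lemma phiB_gt0 z : z <> origin n -> 0 < phiB B z.
Proof.
move=> z_neq0; have := lam_sqnorm_invm_le_xform z; have := sqnorm_ge0 (matvec B z.1).
have := sqnorm_le_qform_inv lam_gt0 Lam_gt0 symM ellM mulMB z.1.
rewrite /phiB -/(xform B z) => x_le u_ge0 ?.
case: (sqnorm_eq0_or_gt0 z.1) => [x0 | x_gt0]; last by have := pow2_ge_0 z.2; nra.
have t_neq0 : z.2 <> 0.
  move=> t0; apply: z_neq0; rewrite (surjective_pairing z) t0 /origin.
  by congr (_, _); apply: functional_extensionality.
by have := pow2_gt_0 _ t_neq0; have := pow2_ge_0 (xform B z); lra.
Qed.

Lemma hess_trace_form_symplectic z : 0 < phiB B z ->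
  hess_trace_form B M (alpha n delta) z = 16 * delta * xform B z.
Proof.
move=> phi_gt0; rewrite /hess_trace_form.
have -> : qform M (hgrad_phiB B z) (hgrad_phiB B z) = 16 * xform B z * phiB B z.
  rewrite /hgrad_phiB qform_lincomb qform_matvec_inv // qform_Jmat_symplectic //.
  rewrite (qformC (matvec (@Jmat n) z.1)) // !qform_invm_Jmat //.
  by rewrite /phiB /xform; ring.
rewrite qform_matvec_inv // qform_Jmat_symplectic // trace_matmul_invm // alphaE.
by rewrite mult_INR /xform /=; field; lra.
Qed.

Lemma sqnorm_hgrad_phiB_le z : sqnorm (hgrad_phiB B z) <= 32 * phiB B z * xform B z / lam.
Proof.
have := lam_sqnorm_invm_le_xform z; have := lam_sqnorm_Jmat_le_xform z.
have := sqnorm_ge0 (matvec B z.1); set u := xform B z => bx_ge0 jx_le bx_le.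
apply: (Rle_trans _ _ _ (sqnorm_lincomb_le _ _ _ _)); rewrite -/u.
apply: (Rmult_le_reg_l lam) => //; rewrite /phiB -/u; field_simplify; try lra.
by have := pow2_ge_0 u; have := pow2_ge_0 z.2; nra.
Qed.

Lemma Rabs_hess_trace_form_le E e z : 0 < e -> opnorm E <= e -> 0 < phiB B z ->
  Rabs (hess_trace_form B E (alpha n delta) z) <= e * xform B z * hess_const n delta lam.
Proof.
move=> e_gt0 Ee phi_gt0; set u := xform B z; set a := alpha n delta.
have a_gt0 : 0 < a := alpha_gt0 n delta_gt0.
have Eform v b : sqnorm v <= b -> Rabs (qform E v v) <= e * b.
  move=> vb; apply: (Rle_trans _ _ _ (Rabs_qform_le_opnorm _ _ e_gt0 Ee)).
  by have := Rmult_le_compat_l _ _ _ (Rlt_le _ _ e_gt0) vb; lra.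
have inv_lam x y : lam * x <= y -> x <= y / lam.
  by move=> xy; apply: (Rmult_le_reg_l lam) => //; field_simplify; lra.
have /Rabs_le_between P_bd := Eform _ _ (sqnorm_hgrad_phiB_le z).
have /Rabs_le_between b_bd := Eform _ _ (inv_lam _ _ (lam_sqnorm_invm_le_xform z)).
have /Rabs_le_between j_bd := Eform _ _ (inv_lam _ _ (lam_sqnorm_Jmat_le_xform z)).
have /Rabs_le_between t_bd : Rabs (trace (matmul E B)) <= e * INR n * (1 / lam ^ 2 + 1).
  have := Rabs_trace_matmul_inv_le lam_gt0 ellM mulMB e_gt0 Ee.
  by rewrite mult_INR /=; lra.
rewrite -/u in P_bd b_bd j_bd.
have u_ge0 : 0 <= u.
  by have := sqnorm_ge0 (matvec B z.1); have := lam_sqnorm_invm_le_xform z; rewrite -/u; nra.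
have c_gt0 : 0 < (a + 1) / phiB B z by apply: Rdiv_lt_0_compat; lra.
have cP : (a + 1) / phiB B z * (e * (32 * phiB B z * u / lam)) = 32 * (a + 1) * e * u / lam.
  by field; lra.
have eqK : e * u * hess_const n delta lam = 32 * (a + 1) * e * u / lam
  + 8 * (e * (u / lam)) + 4 * u * (e * INR n * (1 / lam ^ 2 + 1)) + 8 * (e * (u / lam)).
  by rewrite /hess_const -/a; field; lra.
rewrite eqK /hess_trace_form -/u -/a; apply: Rabs_le; split; nra.
Qed.

Lemma neg_trace_HessH_gfun_ge0 A z :
  opnorm (matsub A M) <= eps_threshold n delta lam -> z <> origin n ->
  0 <= - trace (matmul A (HessH (gfun delta M) z)).
Proof.
move=> AM z_neq0; have phi_gt0 := phiB_gt0 z_neq0.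
have a_gt0 := alpha_gt0 n delta_gt0; have K_gt0 := hess_const_gt0 n delta_gt0 lam_gt0.
have e_gt0 := eps_threshold_gt0 n delta_gt0 lam_gt0.
rewrite neg_trace_HessH_gfun //; last exact: symm_invm.
apply: Rmult_le_pos; first by apply: Rlt_le; apply: Rdiv_lt_0_compat => //; exact: exp_pos.
have := Rabs_hess_trace_form_le e_gt0 AM phi_gt0.
rewrite hess_trace_form_matsub hess_trace_form_symplectic // => /Rabs_le_between [+ _].
have : eps_threshold n delta lam * hess_const n delta lam = 16 * delta.
  by rewrite /eps_threshold; field; lra.
have := lam_sqnorm_invm_le_xform z; have := sqnorm_ge0 (matvec (invm M) z.1); nra.
Qed.
End KeyEstimate.

Lemma Rabs_entry_le_elliptic m (C : mat m) lam Lam : 0 < lam -> symm C ->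
  (forall v : vec m, lam * dotv v v <= dotv (matvec C v) v <= Lam * dotv v v) ->
  forall i k, Rabs (C i k) <= Lam.
Proof.
move=> lam_gt0 symC ellC i k.
have := Rabs_qform_le (uvec k) (uvec i) symC (qform_elliptic_ge0 lam_gt0 ellC) Rlt_0_1.
have diag j : qform C (uvec j) (uvec j) <= Lam.
  by have := ellC (uvec j); rewrite -/(sqnorm _) -/(qform _ _ _) sqnorm_uvec; lra.
by rewrite qform_uvec; have := diag i; have := diag k; lra.
Qed.

Section OscillationOfCoefficients.
Variables (n : nat) (lam Lam : R) (Om : pt n -> Prop) (A : pt n -> mat (2 * n)) (z0 : pt n).
Hypotheses (n_ge1 : (1 <= n)%nat) (lam_gt0 : 0 < lam).
Hypotheses (AM : in_Mn lam Lam Om A) (z0_in : Om z0).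

Lemma opnorm_oscillation_bounded :
  exists b, forall z, Om z -> opnorm (matsub (A z) (A z0)) <= b.
Proof.
have dim_gt0 : (0 < 2 * n)%nat by lia.
have entry_le z : Om z -> forall i k, Rabs (A z i k) <= Lam.
  by move=> /AM [symAz [_ ellAz]]; exact: (Rabs_entry_le_elliptic lam_gt0 symAz ellAz).
have i0 : 'I_(2 * n) := Ordinal dim_gt0.
have Lam_ge0 : 0 <= Lam by have := Rabs_pos (A z0 i0 i0); have := entry_le z0 z0_in i0 i0; lra.
eexists => z z_in; apply: (@opnorm_le_entries _ _ (2 * Lam)) => // [|i k]; first lra.
have := entry_le z z_in i k; have := entry_le z0 z0_in i k; rewrite /matsub.
move=> /Rabs_le_between ? /Rabs_le_between ?; apply: Rabs_le; lra.
Qed.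

Lemma opnorm_le_omegaA z eps : Om z -> Hdist z0 z < eps ->
  opnorm (matsub (A z) (A z0)) <= omegaA Om A z0 eps.
Proof.
move=> z_in z_near; have [b osc_le] := opnorm_oscillation_bounded.
apply: (Rsup_ge (b := b)); last by exists z.
by move=> _ [z' [z'_in [_ ->]]]; exact: osc_le.
Qed.

Lemma omegaA_le r b : 0 < r ->
  (forall z, Om z -> Hdist z0 z < r -> opnorm (matsub (A z) (A z0)) <= b) ->
  omegaA Om A z0 r <= b.
Proof.
move=> r_gt0 osc_le; apply: (Rsup_le (r := opnorm (matsub (A z0) (A z0)))).
  by move=> _ [z [z_in [z_near ->]]]; exact: osc_le.
by exists z0; rewrite Hdist_refl.
Qed.
End OscillationOfCoefficients.

(* [eps0] must be chosen before the coefficients, so it can only be read off [w]; when no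
   [e] has [w e < c], continuity at [z0] shows that no admissible coefficients exist. *)
Lemma radius_of_omegaA n lam Lam (w : R -> R) c : (1 <= n)%nat -> 0 < lam -> 0 < c ->
  exists eps0, 0 < eps0 /\
    forall (Om : pt n -> Prop) (A : pt n -> mat (2 * n)) (z0 : pt n),
      in_Mn lam Lam Om A -> Om z0 -> cont_at Om A z0 ->
      (forall eps, 0 < eps -> omegaA Om A z0 eps = w eps) ->
      forall z, Om z -> Hdist z0 z < eps0 -> opnorm (matsub (A z) (A z0)) < c.
Proof.
move=> n_ge1 lam_gt0 c_gt0.
case: (classic (exists e, 0 < e /\ w e < c)) => [[e [e_gt0 we_lt]] | no_e].
  exists e; split => // Om A z0 AM z0_in _ omegaAw z z_in z_near.
  rewrite -omegaAw // in we_lt.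
  exact: Rle_lt_trans (opnorm_le_omegaA n_ge1 lam_gt0 AM z0_in z_in z_near) we_lt.
exists 1; split => [|Om A z0 AM z0_in contA omegaAw z _ _]; first lra.
have [r [r_gt0 osc_lt]] := contA (c / 2) ltac:(lra).
exfalso; apply: no_e; exists r; split => //; rewrite -omegaAw //.
apply: (Rle_lt_trans _ (c / 2)); last lra.
by apply: omegaA_le => // z' z'_in z'_near; left; exact: osc_lt.
Qed.

Lemma radius_of_modulus n lam Lam (om : R -> R) c :
  (1 <= n)%nat -> 0 < lam -> modulus om -> 0 < c ->
  exists eps0, 0 < eps0 /\
    forall (Om : pt n -> Prop) (A : pt n -> mat (2 * n)) (z0 : pt n),
      in_Mn lam Lam Om A -> in_C Om om A -> Om z0 ->
      forall z, Om z -> Hdist z0 z < eps0 -> opnorm (matsub (A z) (A z0)) < c.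
Proof.
move=> n_ge1 lam_gt0 [_ [_ [_ om_small]]] c_gt0.
have [r [r_gt0 om_lt]] := om_small c c_gt0.
have eps0_gt0 : 0 < Rmin (r / 2) (1 / 2) by apply: Rmin_pos; lra.
have eps0_lt : Rmin (r / 2) (1 / 2) < r /\ Rmin (r / 2) (1 / 2) < 1.
  by have := Rmin_l (r / 2) (1 / 2); have := Rmin_r (r / 2) (1 / 2); lra.
exists (Rmin (r / 2) (1 / 2)); split => // Om A z0 AM [_ omegaA_le_om] z0_in z z_in z_near.
apply: (Rle_lt_trans _ _ _ (opnorm_le_omegaA n_ge1 lam_gt0 AM z0_in z_in z_near)).
apply: (Rle_lt_trans _ (om (Rmin (r / 2) (1 / 2)))); first by apply: omegaA_le_om => //; lra.
by apply: om_lt; lra.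
Qed.

Theorem lemma3p6 :
  (forall (n : nat) (delta lam Lam : R),
     (1 <= n)%nat -> 0 < delta < 1 / 2 -> 0 < lam <= 1 -> 1 <= Lam ->
     forall w : R -> R,
     exists eps0, 0 < eps0 /\
       forall (Om : pt n -> Prop) (A : pt n -> mat (2 * n)) (z0 : pt n),
         H_open Om -> in_Mn lam Lam Om A -> Om z0 -> cont_at Om A z0 ->
         symplectic (A z0) ->
         (forall eps, 0 < eps -> omegaA Om A z0 eps = w eps) ->
         forall z zeta, Om z -> Hdist z0 z < eps0 -> zeta <> @origin n ->
           0 <= - trace (matmul (A z) (HessH (gfun delta (A z0)) zeta)))
  /\
  (forall (n : nat) (delta lam Lam : R) (om : R -> R),
     (1 <= n)%nat -> 0 < delta < 1 / 2 -> 0 < lam <= 1 -> 1 <= Lam ->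
     modulus om ->
     exists eps0, 0 < eps0 /\
       forall (Om : pt n -> Prop) (A : pt n -> mat (2 * n)) (z0 : pt n),
         H_open Om -> in_Mn lam Lam Om A -> in_C Om om A -> Om z0 ->
         cont_at Om A z0 -> symplectic (A z0) ->
         forall z zeta, Om z -> Hdist z0 z < eps0 -> zeta <> @origin n ->
           0 <= - trace (matmul (A z) (HessH (gfun delta (A z0)) zeta))).
Proof.
split.
- move=> n delta lam Lam n_ge1 [delta_gt0 _] [lam_gt0 _] Lam_ge1 w.
  have [eps0 [eps0_gt0 osc_lt]] :=
    radius_of_omegaA Lam w n_ge1 lam_gt0 (eps_threshold_gt0 n delta_gt0 lam_gt0).
  exists eps0; split => // Om A z0 _ AM z0_in contA spA omegaAw z zeta z_in z_near zeta_neq0.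
  have [symA0 [_ ellA0]] := AM z0 z0_in.
  apply: (neg_trace_HessH_gfun_ge0 delta_gt0 lam_gt0 _ symA0 spA ellA0) => //; first lra.
  by apply: Rlt_le; exact: (osc_lt Om A z0).
- move=> n delta lam Lam om n_ge1 [delta_gt0 _] [lam_gt0 _] Lam_ge1 om_mod.
  have [eps0 [eps0_gt0 osc_lt]] :=
    radius_of_modulus Lam n_ge1 lam_gt0 om_mod (eps_threshold_gt0 n delta_gt0 lam_gt0).
  exists eps0; split => // Om A z0 _ AM AC z0_in _ spA z zeta z_in z_near zeta_neq0.
  have [symA0 [_ ellA0]] := AM z0 z0_in.
  apply: (neg_trace_HessH_gfun_ge0 delta_gt0 lam_gt0 _ symA0 spA ellA0) => //; first lra.
  by apply: Rlt_le; exact: (osc_lt Om A z0).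
Qed.
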